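(* Let $d\geq 3$. If $G$ is a connected $d$-regular graph of girth $g\geq 3$ on $n$ vertices, then \[ \mathrm{kiss}(G) \leq \frac{n(n(d - 2)+2)}{2\log_{d-1}\left(\frac{n(d-2) + 2}{d}\right)+1} \quad\text{if } g \text{ is odd}, \] and \[ \mathrm{kiss}(G) \leq \frac{nd(n(d -2)+2)}{4\log_{d-1}\left(\frac{n(d-2) + 2}{2}\right)} \quad\text{if } g \text{ is even}, \] with equality if and only if $G$ is a Moore graph.
   Context: Graphs are finite and may have loops and multiple edges. A walk is a sequence of oriented edges, consecutive ones sharing endpoints; a closed geodesic is a closed walk (up to cyclic permutation) that never immediately backtracks along an edge, including at the base point. The girth is the smallest length of a closed geodesic. The kissing number $\mathrm{kiss}(G)$ is the number of distinct shortest oriented cycles in $G$ (oriented cycles of length equal to the girth). A Moore graph is a connected $d$-regular graph of girth $g$ whose number of vertices equals $1 + d \sum_{j=0}^{(g-3)/2} (d-1)^j$ if $g$ is odd and $2 \sum_{j=0}^{(g-2)/2} (d-1)^j$ if $g$ is even. *)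

From Stdlib Require Import Reals.
From mathcomp Require Import all_boot.
Set Implicit Arguments. Unset Strict Implicit. Unset Printing Implicit Defensive.

(* A graph (loops / multiple edges allowed), Serre-style:
   V vertices, D darts (oriented edges), src : D -> V the origin map,
   inv : D -> D the orientation reversal, a fixed-point-free involution. *)
Definition is_graph (V D : finType) (src : D -> V) (inv : D -> D) : Prop :=
  involutive inv /\ (forall e, inv e != e).

Section G.
Variables (V D : finType) (src : D -> V) (inv : D -> D).

Definition tgt (e : D) : V := src (inv e).

(* degree = number of darts leaving v (a loop contributes 2) *)
Definition regular (d : nat) : Prop := forall v : V, #|[set e | src e == v]| = d.

Definition adj : rel V := fun u v => [exists e, (src e == u) && (tgt e == v)].

Definition connected : Prop := forall u v : V, connect adj u v.

(* closed geodesic (given by a base point): nonempty closed walk e_1..e_k with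
   tgt e_i = src e_{i+1} and e_{i+1} <> inv e_i, indices mod k (so also no
   backtracking at the base point). *)
Definition cgeod (s : seq D) : bool :=
  (0 < size s) &&
  all (fun p : D * D => (tgt p.1 == src p.2) && (p.2 != inv p.1)) (zip s (rot 1 s)).

Definition is_girth (g : nat) : Prop :=
  (exists s, cgeod s /\ size s = g) /\ (forall s, cgeod s -> g <= size s).

(* closed geodesics of length g, up to cyclic permutation *)
Definition rot_class (g : nat) (t : g.-tuple D) : {set g.-tuple D} :=
  [set t' : g.-tuple D | [exists i : 'I_g, val t' == rot i (val t)]].

Definition kiss_at (g : nat) : nat :=
  #|[set rot_class t | t in [set t : g.-tuple D | cgeod t]]|.

Definition moore_count (d g : nat) : nat :=
  if odd g then 1 + d * \sum_(j < (g - 1)./2) (d - 1) ^ j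
  else 2 * \sum_(j < g./2) (d - 1) ^ j.

Definition is_moore : Prop :=
  exists d g, [/\ connected, regular d, is_girth g & #|V| = moore_count d g].

End G.

Local Open Scope R_scope.
Definition logb (b x : R) : R := (ln x / ln b)%R.

Definition bound_odd (n d : nat) : R :=
  (INR n * (INR n * (INR d - 2) + 2) /
   (2 * logb (INR d - 1) ((INR n * (INR d - 2) + 2) / INR d) + 1))%R.

Definition bound_even (n d : nat) : R :=
  (INR n * INR d * (INR n * (INR d - 2) + 2) /
   (4 * logb (INR d - 1) ((INR n * (INR d - 2) + 2) / 2)))%R.

(* Two distinct non-backtracking walks with common endpoints have total length at least
   the girth g, and when the total is at most g, one of them followed by the reverse of the
   other is a closed geodesic.  Hence a closed geodesic of length g is determined by its
   first g/2 + 1 darts (g/2 rounded down), so there are at most n d (d-1)^(g/2) of them; being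
   primitive, each has exactly g rotations, whence g kiss(G) <= n d (d-1)^(g/2).  The same fact
   makes the endpoints of the non-backtracking walks of length at most (g-1)/2 issued from a
   vertex (g odd) or from an edge (g even) pairwise distinct: this is the Moore bound
   n >= M(d, g).  When n = M(d, g) every vertex is such an endpoint, so every non-backtracking
   walk of length g/2 + 1 closes up into a closed geodesic of length g and the count is exact.
   Writing n (d-2) + 2 = r c (d-1)^k with (c, k) = (d, (g-1)/2) or (2, g/2), we get r >= 1,
   with equality exactly for Moore graphs, and the logarithm in the bound is k + log_(d-1) r.
   As ln (d-1) >= ln 2 > 2/3 and 1 + ln r <= r, strictly for r > 1, the denominator of the
   bound exceeds its value at r = 1 by a factor at most r, strictly less unless r = 1. *)

From Pilot Require Import Defs.
From Stdlib Require Import Reals Lra.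
From mathcomp Require Import all_boot zify.

Set Implicit Arguments. Unset Strict Implicit. Unset Printing Implicit Defensive.

Lemma half_subn1 n : 0 < n -> n./2 = (n - 1)./2 + ~~ odd n /\ n = n./2 + (n - 1)./2 + 1.
Proof.
case: n => // n _; rewrite subn1 /= uphalf_half negbK.
by have := odd_double_half n; case: (odd n) => /=; lia.
Qed.

(** * Rotation classes of tuples *)

Section RotationClasses.

Variables (T : finType) (g : nat).
Hypothesis g_gt0 : 0 < g.

Lemma exists_rot_ord (s : seq T) n : size s = g -> exists k : 'I_g, rot n s = rot k s.
Proof.
move=> size_s; have [lt_n_g | ge_n_g] := ltnP n g; first by exists (Ordinal lt_n_g).
by exists (Ordinal g_gt0); rewrite rot0 rot_oversize ?size_s.
Qed.

Definition rot_rel : rel (g.-tuple T) := fun t t' => t' \in rot_class t.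

Lemma rot_relP (t t' : g.-tuple T) : reflect (exists n, val t' = rot n t) (rot_rel t t').
Proof.
rewrite /rot_rel inE; apply: (iffP existsP) => [[i /eqP ->] | [n ->]]; first by exists i.
by have [k ->] := exists_rot_ord n (size_tuple t); exists k.
Qed.

Lemma rot_rel_equiv : equivalence_rel rot_rel.
Proof.
move=> t t' t''; split; first by apply/rot_relP; exists 0; rewrite rot0.
case/rot_relP=> n t'E; apply/rot_relP/rot_relP => -[m t''E].
  exists (rot_add t' (size t' - n) m).
  by rewrite -rot_rot_add t''E t'E -/(rotr n (rot n t)) rotK.
by exists (rot_add t n m); rewrite -rot_rot_add -t'E.
Qed.

Lemma card_rot_class (t : g.-tuple T) :
  (forall i j : 'I_g, rot i t = rot j t -> i = j) -> #|rot_class t| = g.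
Proof.
move=> rot_inj_t.
have -> : rot_class t = [set [tuple of rot i t] | i : 'I_g].
  apply/setP => t'; rewrite inE; apply/existsP/imsetP => [[i /eqP t'E] | [i _ ->]].
    by exists i => //; apply: val_inj.
  by exists i.
by rewrite card_imset ?card_ord // => i j /(congr1 val) /rot_inj_t.
Qed.

Lemma card_rot_classes (A : {set g.-tuple T}) :
  {in A, forall t t', rot_rel t t' -> t' \in A} -> {in A, forall t, #|rot_class t| = g} ->
  #|[set rot_class t | t in A]| * g = #|A|.
Proof.
move=> A_rot card_class.
have partE : [set rot_class t | t in A] = equivalence_partition rot_rel A.
  apply: eq_in_imset => t At; apply/setP => t'; rewrite [in RHS]inE.
  by apply/idP/andP => [t_t' | [] //]; split=> //; exact: A_rot t_t'.
rewrite partE; symmetry; apply: card_uniform_partition.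
  by rewrite -partE => _ /imsetP[t /card_class ? ->].
by apply: equivalence_partitionP => x y z _ _ _; exact: rot_rel_equiv.
Qed.

End RotationClasses.

(** * Non-backtracking walks and closed geodesics *)

Section NonBacktrackingWalks.

Variables (V D : finType) (src : D -> V) (inv : D -> D).
Hypotheses (invK : involutive inv) (inv_neq : forall e, inv e != e).

Local Notation tgt := (tgt src inv).
Local Notation cgeod := (cgeod src inv).

Definition nb_step (e f : D) : bool := (tgt e == src f) && (f != inv e).

Definition nb_walk (v : V) (s : seq D) : bool :=
  if s is e :: s' then (src e == v) && path nb_step e s' else true.

Definition walk_end (v : V) (s : seq D) : V := last v [seq tgt e | e <- s].

Definition rev_walk (s : seq D) : seq D := rev (map inv s).

Lemma tgt_inv e : tgt (inv e) = src e.
Proof. by rewrite /Defs.tgt invK. Qed.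

Lemma nb_step_inv e f : nb_step (inv f) (inv e) = nb_step e f.
Proof. by rewrite /nb_step tgt_inv /Defs.tgt invK eq_sym [inv e == f]eq_sym. Qed.

Lemma cgeodE s : cgeod s = (s != [::]) && cycle nb_step s.
Proof.
case: s => [|x p] //; rewrite /Defs.cgeod /= rot1_cons.
by elim: p {1 3}x => [|y p IHp] z //=; rewrite IHp.
Qed.

Lemma cgeod_cons x p : cgeod (x :: p) = path nb_step x p && nb_step (last x p) x.
Proof. by rewrite cgeodE /= rcons_path. Qed.

Lemma cgeod_rot i s : cgeod (rot i s) = cgeod s.
Proof. by rewrite !cgeodE rot_cycle -!size_eq0 size_rot. Qed.

Lemma cgeod_rev_walk s : cgeod (rev_walk s) = cgeod s.
Proof.
rewrite !cgeodE rev_cycle cycle_map -!size_eq0 size_rev size_map; congr (_ && _).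
by apply: eq_cycle => e f; rewrite /= nb_step_inv.
Qed.

Lemma size_rev_walk s : size (rev_walk s) = size s.
Proof. by rewrite size_rev size_map. Qed.

Lemma rev_walk_cons x s : rev_walk (x :: s) = inv (last x s) :: rev_walk (belast x s).
Proof. by rewrite lastI /rev_walk map_rcons rev_rcons. Qed.

Lemma last_rev_walk x s : last (inv (last x s)) (rev_walk (belast x s)) = inv x.
Proof.
have /= <- := congr1 (last (inv x)) (rev_walk_cons x s).
by rewrite /rev_walk /= rev_cons last_rcons.
Qed.

Lemma path_rev_walk x s :
  path nb_step x s -> path nb_step (inv (last x s)) (rev_walk (belast x s)).
Proof.
rewrite /rev_walk -map_rev path_map rev_path; apply: sub_path => e f /=.
by rewrite nb_step_inv.
Qed.

Lemma nb_walk_behead v e s : nb_walk v (e :: s) -> nb_walk (tgt e) s.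
Proof. by case: s => [|f s] //= /andP[_ /andP[/andP[/eqP -> _] ->]]; rewrite eqxx. Qed.

Lemma nb_walk_belast v s a :
  nb_walk v (rcons s a) -> nb_walk v s /\ walk_end v s = src a.
Proof.
case: s => [|x s] /=; first by case/andP=> /eqP.
rewrite rcons_path => /andP[-> /andP[-> /andP[/eqP end_a _]]].
by rewrite /walk_end /= last_map.
Qed.

Lemma cgeod_cat_rev_walk_cons v e p f q :
  nb_walk v (e :: p) -> nb_walk v (f :: q) -> walk_end v (e :: p) = walk_end v (f :: q) ->
  e != f -> last e p != last f q -> cgeod (e :: p ++ rev_walk (f :: q)).
Proof.
move=> /= /andP[/eqP src_e path_p] /andP[/eqP src_f path_q].
rewrite /walk_end /= !last_map => end_pq neq_ef neq_last.
rewrite cgeod_cons cat_path path_p rev_walk_cons /= path_rev_walk // andbT.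
rewrite last_cat /= last_rev_walk /nb_step tgt_inv src_e src_f end_pq eqxx invK.
by rewrite (inj_eq (inv_inj invK)) [_ == last e p]eq_sym neq_last neq_ef !andbT; apply/eqP.
Qed.

Lemma closed_walk_geodesic v p : nb_walk v p -> walk_end v p = v -> p != [::] ->
  exists2 c, cgeod c & (size c < size p) || (c == p).
Proof.
have [n] := ubnP (size p); elim: n => // n IHn in p v *.
case: p => // e p lt_p_n /[dup] nb_ep /= /andP[/eqP src_e path_p].
rewrite /walk_end /= last_map => end_p _.
have [last_p | last_p] := eqVneq (last e p) (inv e); last first.
  exists (e :: p); rewrite ?eqxx ?orbT // cgeod_cons path_p /nb_step end_p src_e eqxx.
  by rewrite -(inj_eq (inv_inj invK)) invK eq_sym last_p.
case/lastP: p => [|r a] in lt_p_n nb_ep path_p last_p end_p *.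
  by move: (inv_neq e); rewrite -last_p eqxx.
rewrite last_rcons in last_p; subst a.
case: r => [|f r] in lt_p_n nb_ep path_p end_p *.
  by rewrite /= /nb_step eqxx andbF in path_p.
have [nb_r end_r] := nb_walk_belast (nb_walk_behead nb_ep).
have lt_r_n : size (f :: r) < n by move: lt_p_n; rewrite /= size_rcons /=; lia.
have end_r' : walk_end (tgt e) (f :: r) = tgt e by rewrite end_r.
have [c cgeod_c size_c] := IHn (f :: r) (tgt e) lt_r_n nb_r end_r' isT.
exists c => //; rewrite size_rcons /= ltnS.
by apply/orP; left; case/orP: size_c => [|/eqP ->] /=; lia.
Qed.

(* Cancel a common first or last dart; when there is none, p followed by q reversed is a
   closed geodesic. *)
Lemma distinct_walks_geodesic v p q :
  nb_walk v p -> nb_walk v q -> walk_end v p = walk_end v q -> p != q ->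
  exists2 c, cgeod c & (size c < size p + size q) || (c == p ++ rev_walk q).
Proof.
have [n] := ubnP (size p + size q); elim: n => // n IHn in v p q *.
move=> lt_pq_n nb_p nb_q end_pq neq_pq.
have shorter w p' q' : nb_walk w p' -> nb_walk w q' -> walk_end w p' = walk_end w q' ->
    p' != q' -> size p' + size q' < size p + size q ->
    exists2 c, cgeod c & (size c < size p + size q) || (c == p ++ rev_walk q).
  move=> nb_p' nb_q' end_pq' neq_pq' lt_pq'.
  have [|c cgeod_c size_c] := IHn w p' q' _ nb_p' nb_q' end_pq' neq_pq'; first lia.
  exists c => //; apply/orP; left.
  by case/orP: size_c => [|/eqP ->]; rewrite ?size_cat ?size_rev_walk; lia.
case: q => [|f q] in lt_pq_n nb_q end_pq neq_pq shorter *.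
  have [c cgeod_c size_c] := closed_walk_geodesic nb_p end_pq neq_pq.
  by exists c; rewrite ?cats0 ?addn0.
case: p => [|e p] in lt_pq_n nb_p end_pq neq_pq shorter *.
  have [c cgeod_c size_c] := closed_walk_geodesic nb_q (esym end_pq) isT.
  exists (rev_walk c); rewrite ?cgeod_rev_walk // size_rev_walk.
  by case/orP: size_c => [-> // | /eqP ->]; rewrite eqxx orbT.
have [eq_ef | neq_ef] := eqVneq e f.
  subst f; apply: (shorter _ _ _ (nb_walk_behead nb_p) (nb_walk_behead nb_q)) => //=.
  - by apply: contra neq_pq => /eqP ->.
  - lia.
have [eq_last | neq_last] := eqVneq (last e p) (last f q); last first.
  exists (e :: p ++ rev_walk (f :: q)); last by rewrite eqxx orbT.
  exact: cgeod_cat_rev_walk_cons nb_p nb_q end_pq neq_ef neq_last.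
rewrite lastI in nb_p neq_pq; rewrite lastI in nb_q neq_pq.
have [nb_p' end_p'] := nb_walk_belast nb_p; have [nb_q' end_q'] := nb_walk_belast nb_q.
apply: (shorter _ _ _ nb_p' nb_q'); first by rewrite end_p' end_q' eq_last.
  by apply: contra neq_pq => /eqP ->; rewrite eq_last.
by rewrite /= !size_belast; lia.
Qed.

(** * Counting non-backtracking walks *)

Fixpoint nb_paths (m : nat) (e : D) : seq (seq D) :=
  if m is m'.+1 then [seq f :: s | f <- enum [pred f | nb_step e f], s <- nb_paths m' f]
  else [:: [::]].

(* [nb_walks_on P m] lists the walks with m.+1 darts whose first dart satisfies P, and
   [nb_ball P k] those with at most k darts, the empty walk included. *)
Definition nb_walks_on (P : pred D) (m : nat) : seq (seq D) :=
  [seq f :: s | f <- enum P, s <- nb_paths m f].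

Fixpoint nb_ball (P : pred D) (k : nat) : seq (seq D) :=
  if k is k'.+1 then nb_ball P k' ++ nb_walks_on P k' else [:: [::]].

Lemma mem_nb_paths m e s : (s \in nb_paths m e) = (size s == m) && path nb_step e s.
Proof.
elim: m e s => [|m IHm] e s /=; first by case: s.
apply/allpairsPdep/idP => [[f [s' [ef s'_in ->]]] | ].
  by rewrite mem_enum inE in ef; rewrite IHm in s'_in; rewrite /= eqSS ef.
case: s => [|f s] //= /andP[size_s /andP[ef path_s]]; exists f, s.
by rewrite mem_enum inE ef IHm -eqSS size_s path_s.
Qed.

Lemma mem_nb_walks_on P m s : (s \in nb_walks_on P m) =
  if s is f :: s' then [&& P f, size s' == m & path nb_step f s'] else false.
Proof.
apply/allpairsPdep/idP => [[f [s' [Pf s'_in ->]]] | ].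
  rewrite mem_enum in Pf; rewrite mem_nb_paths in s'_in.
  by case/andP: s'_in => -> ->; rewrite !andbT.
case: s => [|f s] // /and3P[Pf size_s path_s]; exists f, s.
by rewrite mem_enum mem_nb_paths size_s path_s.
Qed.

Lemma mem_nb_ball P k s : (s \in nb_ball P k) =
  if s is f :: s' then [&& P f, size s' < k & path nb_step f s'] else true.
Proof.
elim: k => [|k IHk] /=; first by case: s => [|f s]; rewrite ?inE ?andbF.
rewrite mem_cat IHk mem_nb_walks_on; case: s {IHk} => [|f s] //.
rewrite ltnS (leq_eqVlt (size s) k).
by case: (P f); case: (path nb_step f s); rewrite /= ?andbT ?andbF // orbC.
Qed.

Lemma cons_allpairs_uniq (l : seq D) (ss : D -> seq (seq D)) :
  uniq l -> (forall x, uniq (ss x)) -> uniq [seq f :: s | f <- l, s <- ss f].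
Proof.
move=> uniq_l uniq_ss; apply: (allpairs_uniq_dep (T := fun _ => seq D)) => //.
by move=> [x s] [y t] _ _ /= [-> ->].
Qed.

Lemma size_cons_allpairs (l : seq D) (ss : D -> seq (seq D)) c :
  (forall x, size (ss x) = c) -> size [seq f :: s | f <- l, s <- ss f] = size l * c.
Proof. by move=> size_ss; rewrite size_allpairs_dep; elim: l => //= x l ->; rewrite size_ss. Qed.

Lemma uniq_nb_walks_on P m : uniq (nb_walks_on P m).
Proof.
apply: cons_allpairs_uniq; first exact: enum_uniq.
by elim: m => [|m IHm] e //=; apply: cons_allpairs_uniq => //; exact: enum_uniq.
Qed.

Lemma uniq_nb_ball P k : uniq (nb_ball P k).
Proof.
elim: k => [|k IHk] //=; rewrite cat_uniq IHk uniq_nb_walks_on andbT /=.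
apply/hasPn => -[|f s]; rewrite mem_nb_walks_on // mem_nb_ball => /and3P[_ /eqP -> _].
by rewrite ltnn andbF.
Qed.

Lemma nb_ball_walk (P : pred D) k v (s : seq D) :
  (forall f, P f -> src f = v) -> s \in nb_ball P k -> nb_walk v s /\ size s <= k.
Proof.
move=> src_P; rewrite mem_nb_ball.
by case: s => [|f s] //= /and3P[/src_P -> lt_s ->]; rewrite eqxx.
Qed.

Variable d : nat.
Hypothesis reg : regular src d.

Lemma card_nb_step e : #|[pred f | nb_step e f]| = d.-1.
Proof.
have := cardsD1 (inv e) [set f | src f == tgt e]; rewrite reg inE eqxx add1n => /= ->.
by apply: eq_card => f; rewrite !inE /nb_step andbC [tgt e == _]eq_sym.
Qed.

Lemma card_darts : #|D| = #|V| * d.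
Proof.
rewrite -sum1_card (partition_big src predT) //= -sum_nat_const.
by apply: eq_bigr => v _; rewrite -(reg v) -sum1_card; apply: eq_bigl => e; rewrite inE.
Qed.

Lemma size_nb_paths m e : size (nb_paths m e) = d.-1 ^ m.
Proof.
elim: m e => [|m IHm] e //=.
by rewrite (size_cons_allpairs _ IHm) -cardE card_nb_step expnS.
Qed.

Lemma size_nb_walks_on P m : size (nb_walks_on P m) = #|P| * d.-1 ^ m.
Proof. by rewrite (size_cons_allpairs _ (size_nb_paths m)) -cardE. Qed.

Lemma size_nb_ball P k : size (nb_ball P k) = 1 + #|P| * \sum_(j < k) d.-1 ^ j.
Proof.
elim: k => [|k IHk] /=; first by rewrite big_ord0 muln0.
by rewrite size_cat IHk size_nb_walks_on big_ord_recr /= mulnDr addnA.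
Qed.

(** * Closed geodesics of minimal length and the Moore bound *)

Variable g : nat.
Hypothesis girth : is_girth src inv g.

Lemma girth_le_walks v p q :
  nb_walk v p -> nb_walk v q -> walk_end v p = walk_end v q -> p != q ->
  g <= size p + size q.
Proof.
move=> nb_p nb_q end_pq neq_pq.
have [c /girth.2 g_le_c] := distinct_walks_geodesic nb_p nb_q end_pq neq_pq.
by case/orP=> [|/eqP c_eq]; rewrite ?c_eq ?size_cat ?size_rev_walk in g_le_c *; lia.
Qed.

Lemma cgeod_cat_rev_walk v p q :
  nb_walk v p -> nb_walk v q -> walk_end v p = walk_end v q -> p != q ->
  size p + size q <= g -> cgeod (p ++ rev_walk q).
Proof.
move=> nb_p nb_q end_pq neq_pq le_pq_g.
have [c /[dup] cgeod_c /girth.2 g_le_c] := distinct_walks_geodesic nb_p nb_q end_pq neq_pq.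
by case/orP=> [|/eqP <-] //; lia.
Qed.

(* A closed geodesic fixed by the rotation by m already closes up after m darts. *)
Lemma rot_cgeod_neq u m : cgeod u -> size u = g -> 0 < m < g -> rot m u != u.
Proof.
case: u => [|x p] //; case: m => [|m] // cgeod_u size_u /andP[_ lt_m_g].
have lt_m_p : m < size p by move: size_u => /=; lia.
apply/eqP => rot_u; have nth_m : nth x p m = x.
  by move: rot_u; rewrite /rot /= (drop_nth x lt_m_p) => -[].
have /girth.2 : cgeod (x :: take m p).
  move: cgeod_u; rewrite !cgeod_cons -{1}(cat_take_drop m p) cat_path (drop_nth x lt_m_p).
  by rewrite nth_m /= => /andP[/andP[-> /andP[-> _]] _].
by rewrite /= size_take lt_m_p; lia.
Qed.

Definition closed_geodesics : {set g.-tuple D} := [set t : g.-tuple D | cgeod t].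

Lemma kiss_at_mul_girth : kiss_at src inv g * g = #|closed_geodesics|.
Proof.
have g_gt0 : 0 < g by case: girth => -[[|x s] [cgeod_s <-]].
apply: card_rot_classes => // t; rewrite inE => cgeod_t.
  by move=> t' /(rot_relP g_gt0)[n t'E]; rewrite inE t'E cgeod_rot.
apply: card_rot_class => i j.
wlog lt_ij : i j / i < j.
  move=> wlog_ij rot_ij; have [lt_ij | lt_ji | /val_inj //] := ltngtP i j.
    exact: wlog_ij.
  exact/esym/wlog_ij.
move=> rot_ij; suff : rot (j - i) (rot i t) != rot i t.
  rewrite -rotD (subnK (ltnW lt_ij)) ?rot_ij ?eqxx // size_tuple.
  exact: ltnW (ltn_ord j).
apply: rot_cgeod_neq; first by rewrite cgeod_rot.
  by rewrite size_rot size_tuple.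
by have := ltn_ord j; lia.
Qed.

Hypothesis g_gt2 : 2 < g.

Lemma nb_walk_path_rcons a s x :
  path nb_step a (rcons s x) -> nb_walk (tgt a) s /\ walk_end (tgt a) s = src x.
Proof.
case: s => [|y s] /=; first by case/andP=> /andP[/eqP].
case/andP=> /andP[/eqP -> _]; rewrite rcons_path => /andP[-> /andP[/eqP end_s _]].
by rewrite eqxx /walk_end /= last_map.
Qed.

Lemma cgeod_take_inj s1 s2 : cgeod s1 -> cgeod s2 -> size s1 = g -> size s2 = g ->
  take g./2.+1 s1 = take g./2.+1 s2 -> s1 = s2.
Proof.
have [_ gE] := half_subn1 (ltnW (ltnW g_gt2)).
case: s1 s2 => [|x p1] [|y p2] //; rewrite !cgeodE /=.
move=> cycle_1 cycle_2 size_1 size_2 [eq_xy take_12].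
subst y; congr (_ :: _); rewrite -(cat_take_drop g./2 p1) -(cat_take_drop g./2 p2) take_12.
congr (_ ++ _); apply/eqP; apply: contraT => neq_drop.
move: cycle_1 cycle_2; rewrite -(cat_take_drop g./2 p1) -(cat_take_drop g./2 p2) !rcons_cat.
rewrite !cat_path take_12 => /andP[_ /nb_walk_path_rcons[nb_1 end_1]].
case/andP=> _ /nb_walk_path_rcons[nb_2 end_2].
have := girth_le_walks nb_1 nb_2 (etrans end_1 (esym end_2)) neq_drop.
by rewrite !size_drop; lia.
Qed.

Lemma card_closed_geodesics_le : #|closed_geodesics| <= #|D| * d.-1 ^ g./2.
Proof.
have [halfE gE] := half_subn1 (ltnW (ltnW g_gt2)).
have -> : #|D| = #|predT : pred D| by apply: eq_card.
rewrite -size_nb_walks_on cardE -(size_map (fun t : g.-tuple D => take g./2.+1 t)).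
apply: uniq_leq_size.
  rewrite map_inj_in_uniq ?enum_uniq // => t1 t2; rewrite !mem_enum !inE => cgeod_1 cgeod_2.
  by move/(cgeod_take_inj cgeod_1 cgeod_2 (size_tuple t1) (size_tuple t2))/val_inj.
move=> w /mapP[t]; rewrite mem_enum inE => cgeod_t ->.
case: t cgeod_t => -[|x p] //= size_p; have {}size_p : (size p).+1 = g by apply/eqP.
rewrite cgeod_cons mem_nb_walks_on size_take.
have -> : g./2 < size p by have := leq_b1 (~~ odd g); lia.
rewrite eqxx => /andP[+ _].
by rewrite -{1}(cat_take_drop g./2 p) cat_path => /andP[].
Qed.

(* The ball of radius (g-1)/2 around the vertex src x, or for even g around the edge x. *)
Definition in_moore_ball (x : D) (u : V) : Prop :=
  exists2 b, size b <= (g - 1)./2 &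
    (nb_walk (src x) b /\ walk_end (src x) b = u) \/
    [/\ ~~ odd g, nb_walk (tgt x) b & walk_end (tgt x) b = u].

Lemma walk_end_nb_ball_uniq (P : pred D) v k :
  (forall f, P f -> src f = v) -> k + k < g -> uniq (map (walk_end v) (nb_ball P k)).
Proof.
move=> src_P lt_kk_g; rewrite map_inj_in_uniq ?uniq_nb_ball // => s1 s2 s1_in s2_in end_12.
have [nb_1 size_1] := nb_ball_walk src_P s1_in; have [nb_2 size_2] := nb_ball_walk src_P s2_in.
apply/eqP; apply: contraTT lt_kk_g => /(girth_le_walks nb_1 nb_2 end_12) g_le.
by rewrite -leqNgt (leq_trans g_le) ?leq_add.
Qed.

Lemma sum_expn_recl (a k : nat) : 1 + a * \sum_(j < k) a ^ j = \sum_(j < k.+1) a ^ j.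
Proof. by rewrite big_ord_recl big_distrr; congr (_ + _); apply: eq_bigr => j _; rewrite expnS. Qed.

Lemma moore_ball_spec x : exists E : seq V,
  [/\ uniq E, size E = moore_count d g & forall u, u \in E -> in_moore_ball x u].
Proof.
have [halfE gE] := half_subn1 (ltnW (ltnW g_gt2)).
case: (boolP (odd g)) => odd_g; rewrite odd_g /= in halfE.
  have src_x : forall f, [pred f | src f == src x] f -> src f = src x by move=> f /eqP.
  exists (map (walk_end (src x)) (nb_ball [pred f | src f == src x] (g - 1)./2)); split.
  - by apply: walk_end_nb_ball_uniq => //; lia.
  - rewrite size_map size_nb_ball /moore_count odd_g [d - 1]subn1; congr (_ + _ * _).
    by rewrite -(reg (src x)); apply: eq_card => f; rewrite inE.
  - move=> _ /mapP[b b_in ->]; have [nb_b size_b] := nb_ball_walk src_x b_in.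
    by exists b => //; left.
have src_ix : forall f, nb_step (inv x) f -> src f = src x.
  by move=> f /andP[/eqP <- _]; rewrite tgt_inv.
have src_x : forall f, nb_step x f -> src f = tgt x by move=> f /andP[/eqP <-].
exists (map (walk_end (src x)) (nb_ball (nb_step (inv x)) (g - 1)./2) ++
        map (walk_end (tgt x)) (nb_ball (nb_step x) (g - 1)./2)); split.
- rewrite cat_uniq !walk_end_nb_ball_uniq //; try lia.
  rewrite andbT /=; apply/hasPn => _ /mapP[b b_in ->]; apply/negP => /mapP[a a_in end_ab].
  have [nb_a size_a] := nb_ball_walk src_ix a_in; have [nb_b size_b] := nb_ball_walk src_x b_in.
  have nb_xb : nb_walk (src x) (x :: b).
    move: b_in; rewrite mem_nb_ball /= eqxx.
    by case: b {nb_b size_b end_ab} => [|f b] //= /and3P[-> _ ->].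
  have neq_xb_a : x :: b != a.
    move: a_in; rewrite mem_nb_ball; case: a {nb_a size_a end_ab} => [|f a] //= /and3P[/andP[_]].
    by rewrite invK => neq_fx _ _; apply: contra neq_fx => /eqP[->].
  by have /= := girth_le_walks nb_xb nb_a end_ab neq_xb_a; lia.
- rewrite size_cat !size_map !size_nb_ball !card_nb_step /moore_count (negbTE odd_g) [d - 1]subn1.
  by rewrite halfE addn1 -sum_expn_recl; lia.
- move=> u; rewrite mem_cat => /orP[] /mapP[b b_in ->].
    by have [nb_b size_b] := nb_ball_walk src_ix b_in; exists b => //; left.
  by have [nb_b size_b] := nb_ball_walk src_x b_in; exists b => //; right.
Qed.

Lemma moore_count_le (x : D) : moore_count d g <= #|V|.
Proof.
have [E [uniq_E <- _]] := moore_ball_spec x.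
by rewrite cardE uniq_leq_size // => u _; rewrite mem_enum.
Qed.

Lemma moore_in_ball : #|V| = moore_count d g -> forall x u, in_moore_ball x u.
Proof.
move=> card_V x u; have [E [uniq_E size_E E_ball]] := moore_ball_spec x; apply: E_ball.
have sub_E : {subset E <= enum V} by move=> ? _; rewrite mem_enum.
have le_size : size (enum V) <= size E by rewrite -cardE card_V size_E.
by have [_ ->] := uniq_min_size uniq_E sub_E le_size; rewrite mem_enum.
Qed.

Lemma card_closed_geodesics_moore :
  #|V| = moore_count d g -> #|closed_geodesics| = #|D| * d.-1 ^ g./2.
Proof.
move=> /moore_in_ball in_ball; have [halfE gE] := half_subn1 (ltnW (ltnW g_gt2)).
apply/eqP; rewrite eqn_leq card_closed_geodesics_le /=.
have -> : #|D| = #|predT : pred D| by apply: eq_card.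
rewrite -size_nb_walks_on cardE -(size_map (fun t : g.-tuple D => take g./2.+1 t)).
apply: uniq_leq_size; first exact: uniq_nb_walks_on.
case=> [|x p]; rewrite mem_nb_walks_on // => /and3P[_ size_p path_p].
have {}size_p : size (p : seq D) = g./2 by apply/eqP.
have nb_xp : nb_walk (src x) (x :: p) by rewrite /= eqxx.
have [b size_b [[nb_b end_b] | [even_g nb_b end_b]]] := in_ball x (walk_end (src x) (x :: p)).
  have neq_xp_b : x :: p != b by apply: contraTneq size_b => <- /=; lia.
  have /= le_g := girth_le_walks nb_xp nb_b (esym end_b) neq_xp_b.
  have size_xpb : size (x :: p ++ rev_walk b) = g by rewrite /= size_cat size_rev_walk; lia.
  apply/mapP; exists (Tuple (introT eqP size_xpb)); last by rewrite /= take_size_cat /= ?size_p.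
  rewrite mem_enum inE; apply: (cgeod_cat_rev_walk nb_xp nb_b) => //=; lia.
(* For even g, p and b would be distinct walks from tgt x of total length below g. *)
have neq_pb : p != b by apply: contraTneq size_b => <-; rewrite size_p; move: even_g halfE; lia.
have := girth_le_walks (nb_walk_behead nb_xp) nb_b (esym end_b) neq_pb.
by move: even_g halfE; rewrite size_p; lia.
Qed.

Lemma kiss_at_girth_bounds :
  [/\ kiss_at src inv g * g <= #|V| * d * (d - 1) ^ g./2,
      moore_count d g <= #|V| &
      (#|V| = moore_count d g -> kiss_at src inv g * g = #|V| * d * (d - 1) ^ g./2)].
Proof.
have [x _] : exists x : D, true by case: girth => -[[|x s] [cgeod_s _]] _ //; exists x.
rewrite kiss_at_mul_girth -card_darts subn1; split; first exact: card_closed_geodesics_le.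
  exact: moore_count_le x.
exact: card_closed_geodesics_moore.
Qed.

End NonBacktrackingWalks.

Lemma geometric_sum (a K : nat) : 0 < a -> (a - 1) * \sum_(j < K) a ^ j + 1 = a ^ K.
Proof.
move=> a_gt0; elim: K => [|K IHK]; first by rewrite big_ord0 muln0.
by rewrite big_ord_recr /= mulnDr -addnA addnC -addnA [1 + _]addnC IHK expnS; nia.
Qed.

Lemma moore_count_odd d g : 2 <= d -> odd g ->
  moore_count d g * (d - 2) + 2 = d * (d - 1) ^ (g - 1)./2.
Proof.
rewrite /moore_count => d_ge2 ->; have := @geometric_sum (d - 1) (g - 1)./2 ltac:(lia).
by move: (\sum_(j < _) _) ((d - 1) ^ _) => S P; nia.
Qed.

Lemma moore_count_even d g : 2 <= d -> ~~ odd g ->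
  moore_count d g * (d - 2) + 2 = 2 * (d - 1) ^ g./2.
Proof.
rewrite /moore_count => d_ge2 /negbTE ->; have := @geometric_sum (d - 1) g./2 ltac:(lia).
by move: (\sum_(j < _) _) ((d - 1) ^ _) => S P; nia.
Qed.

Lemma is_moore_iff (V D : finType) (src : D -> V) (inv : D -> D) (d g : nat) (v : V) :
  connected src inv -> regular src d -> is_girth src inv g ->
  is_moore src inv <-> #|V| = moore_count d g.
Proof.
move=> conn reg girth; split=> [[d' [g' [_ reg' girth' ->]]] | card_V]; last by exists d, g.
have -> : d' = d by rewrite -(reg' v) reg.
suff -> : g' = g by [].
case: girth girth' => [[s [cgeod_s <-]] g_le] [[s' [cgeod_s' <-]] g'_le].
by apply/eqP; rewrite eqn_leq g_le ?g'_le.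
Qed.

(** * From the count to the logarithmic bound *)

Section RealBounds.

Local Open Scope R_scope.

Lemma ln2_gt_2_3 : 2 / 3 < ln 2.
Proof.
have e18_le : exp (1 / 18) <= 18 / 17.
  have := exp_ineq1_le (- (1 / 18)).
  have := exp_pos (1 / 18).
  have : exp (1 / 18) * exp (- (1 / 18)) = 1 by rewrite -exp_plus Rplus_opp_r exp_0.
  nra.
have e23_lt : exp (2 / 3) < 2.
  have -> : exp (2 / 3) = exp (1 / 18) ^ 12.
    rewrite -[RHS]exp_ln; last by apply: pow_lt; apply: exp_pos.
    by rewrite ln_pow ?ln_exp /=; [congr exp; field | apply: exp_pos].
  apply: (Rle_lt_trans _ ((18 / 17) ^ 12)); last by rewrite /=; lra.
  by apply: pow_incr; split; [apply: Rlt_le; apply: exp_pos | ].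
by rewrite -[2 / 3]ln_exp; apply: ln_increasing => //; apply: exp_pos.
Qed.

Lemma ln_gt_2_3 (a : R) : 2 <= a -> 2 / 3 < ln a.
Proof.
move=> a_ge2; apply: (Rlt_le_trans _ _ _ ln2_gt_2_3).
case: (Rle_lt_or_eq_dec _ _ a_ge2) => [lt2a | <-]; last exact: Rle_refl.
by apply: Rlt_le; apply: ln_increasing => //; lra.
Qed.

Lemma ln_add1_le (r : R) : 0 < r -> 1 + ln r <= r.
Proof. by move=> r_gt0; rewrite -[X in _ <= X]exp_ln //; apply: exp_ineq1_le. Qed.

Lemma ln_add1_lt (r : R) : 1 < r -> 1 + ln r < r.
Proof.
move=> r_gt1; rewrite -[X in _ < X]exp_ln; last lra.
apply: exp_ineq1; rewrite -ln_1; apply: Rgt_not_eq; apply: ln_increasing; lra.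
Qed.

Lemma logb_div_pow (a c X : R) (k : nat) : 1 < a -> 0 < c -> 0 < X ->
  logb a (X / c) = INR k + logb a (X / (c * a ^ k)).
Proof.
move=> a_gt1 c_gt0 X_gt0; have ak_gt0 : 0 < a ^ k by apply: pow_lt; lra.
have X0_gt0 : 0 < c * a ^ k by apply: Rmult_lt_0_compat.
have -> : X / c = X / (c * a ^ k) * a ^ k by field; lra.
have lna_gt0 : 0 < ln a by rewrite -ln_1; apply: ln_increasing; lra.
rewrite /logb ln_mult ?ln_pow //; try lra; first by field; lra.
by apply: Rmult_lt_0_compat => //; apply: Rinv_0_lt_compat.
Qed.

Lemma logb_bounds (a r α q : R) : 1 < a -> 1 <= r -> 0 <= α -> α <= q * ln a ->
  0 <= α * logb a r <= q * ln r.
Proof.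
move=> a_gt1 r_ge1 α_ge0 α_le; rewrite /logb.
have lna_gt0 : 0 < ln a by rewrite -ln_1; apply: ln_increasing; lra.
have lnr_ge0 : 0 <= ln r.
  case: (Rle_lt_or_eq_dec _ _ r_ge1) => [r_gt1 | <-]; last by rewrite ln_1; lra.
  by rewrite -ln_1; apply: Rlt_le; apply: ln_increasing; lra.
have -> : α * (ln r / ln a) = α * ln r * / ln a by field; lra.
have inv_gt0 := Rinv_0_lt_compat _ lna_gt0.
split; first by apply: Rmult_le_pos => //; nra.
apply: (Rmult_le_reg_r (ln a)) => //.
have -> : α * ln r * / ln a * ln a = α * ln r by field; lra.
nra.
Qed.

Lemma logb_bound (a c α β N K X : R) (k : nat) :
  1 < a -> 0 < c -> 0 < N -> 0 <= K -> 0 <= α -> 0 < α * INR k + β ->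
  α <= (α * INR k + β) * ln a ->
  c * a ^ k <= X -> K * (α * INR k + β) <= N * (c * a ^ k) ->
  K <= N * X / (α * logb a (X / c) + β) /\
  (K = N * X / (α * logb a (X / c) + β) <->
     X = c * a ^ k /\ K * (α * INR k + β) = N * (c * a ^ k)).
Proof.
move=> a_gt1 c_gt0 N_gt0 K_ge0 α_ge0 q_gt0 α_le X0_le K_le.
set q := α * INR k + β in q_gt0 α_le K_le *; set X0 := c * a ^ k in X0_le K_le *.
have X0_gt0 : 0 < X0 by apply: Rmult_lt_0_compat => //; apply: pow_lt; lra.
rewrite (logb_div_pow k) //; last lra.
have -> : α * (INR k + logb a (X / X0)) + β = q + α * logb a (X / X0) by rewrite /q; ring.
set r := X / X0; have X_eq : X = r * X0 by rewrite /r; field; lra.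
have r_ge1 : 1 <= r by nra.
have [logb_ge0 logb_le] := logb_bounds a_gt1 r_ge1 α_ge0 α_le.
set Dn := q + α * logb a r; have Dn_ge_q : q <= Dn by rewrite /Dn; lra.
set B := N * X / Dn.
have B_eq : B * Dn = N * X by rewrite /B; field; lra.
have K_le_B : K <= B.
  have Dn_le : Dn <= q * r by have := @ln_add1_le r; rewrite /Dn; nra.
  apply: (Rmult_le_reg_r Dn); first lra.
  rewrite B_eq X_eq; apply: (Rle_trans _ (K * (q * r))); first exact: Rmult_le_compat_l.
  by have := Rmult_le_compat_r r _ _ ltac:(lra) K_le; lra.
have K_lt_B : X0 < X -> K < B.
  move=> X0_lt; have r_gt1 : 1 < r by nra.
  have Dn_lt : Dn < q * r by have := ln_add1_lt r_gt1; rewrite /Dn; nra.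
  apply: (Rmult_lt_reg_r Dn); first lra.
  rewrite B_eq X_eq; have := Rmult_le_compat_r r _ _ ltac:(lra) K_le.
  case: K_ge0 => [K_gt0 | <-]; first by have := Rmult_lt_compat_l K _ _ K_gt0 Dn_lt; lra.
  by move=> _; rewrite Rmult_0_l; apply: Rmult_lt_0_compat; nra.
have Dn_eq : X = X0 -> Dn = q.
  by move=> X_eq0; rewrite /Dn /r X_eq0 /Rdiv Rinv_r ?/logb ?ln_1; lra.
split => //; split.
- move=> K_eq; have X_eq0 : X = X0.
    by apply: Rle_antisym => //; apply: Rnot_lt_le => /K_lt_B; lra.
  by split=> //; rewrite -X_eq0 -B_eq -K_eq Dn_eq.
- case=> X_eq0 K_eq.
  by rewrite /B Dn_eq // X_eq0 -K_eq; field; lra.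
Qed.

Lemma INR_muln (m n : nat) : INR (m * n) = INR m * INR n.
Proof. exact: mult_INR. Qed.

Lemma INR_addn (m n : nat) : INR (m + n) = INR m + INR n.
Proof. exact: plus_INR. Qed.

Lemma INR_expn (m n : nat) : INR (m ^ n) = INR m ^ n.
Proof. by elim: n => [|n IHn] //; rewrite expnS INR_muln IHn. Qed.

Lemma INR_subn (m n : nat) : (n <= m)%N -> INR (m - n) = INR m - INR n.
Proof. by move/leP; exact: minus_INR. Qed.

Lemma INR_leq (m n : nat) : (m <= n)%N -> INR m <= INR n.
Proof. by move/leP; exact: le_INR. Qed.

Lemma logb_bound_moore (n d M K k : nat) (c N α β : R) :
  (3 <= d)%N -> (M <= n)%N -> INR M * (INR d - 2) + 2 = c * (INR d - 1) ^ k ->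
  0 < N -> 0 <= α -> 0 < α * INR k + β -> α <= (α * INR k + β) * ln (INR d - 1) ->
  INR K * (α * INR k + β) <= N * (c * (INR d - 1) ^ k) ->
  (n = M -> INR K * (α * INR k + β) = N * (c * (INR d - 1) ^ k)) ->
  let X := INR n * (INR d - 2) + 2 in
  INR K <= N * X / (α * logb (INR d - 1) (X / c) + β) /\
  (INR K = N * X / (α * logb (INR d - 1) (X / c) + β) <-> n = M).
Proof.
move=> d_ge3 M_le_n moore_eq N_gt0 α_ge0 q_gt0 α_le K_le K_eq X.
have d_ge3R : 3 <= INR d by have := INR_leq d_ge3; rewrite /=; lra.
have M_le_nR := INR_leq M_le_n.
have ak_gt0 : 0 < (INR d - 1) ^ k by apply: pow_lt; lra.
have c_gt0 : 0 < c by have := pos_INR M; nra.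
have a_gt1 : 1 < INR d - 1 by lra.
have X0_le : c * (INR d - 1) ^ k <= X by rewrite -moore_eq /X; nra.
have [K_le_bound K_eqE] := logb_bound a_gt1 c_gt0 N_gt0 (pos_INR K) α_ge0 q_gt0 α_le X0_le K_le.
split=> //; rewrite K_eqE; split=> [[X_eq _] | n_eq].
  by apply: INR_eq; move: X_eq; rewrite /X -moore_eq; nra.
by split; [rewrite /X -moore_eq n_eq | exact: K_eq].
Qed.

Lemma kiss_bound_odd (n d g K : nat) :
  (3 <= d)%N -> (3 <= g)%N -> odd g -> (moore_count d g <= n)%N ->
  (K * g <= n * d * (d - 1) ^ g./2)%N ->
  (n = moore_count d g -> K * g = n * d * (d - 1) ^ g./2)%N ->
  INR K <= bound_odd n d /\ (INR K = bound_odd n d <-> n = moore_count d g).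
Proof.
move=> d_ge3 g_ge3 odd_g M_le Kg_le Kg_eq.
have [halfE gE] := half_subn1 (ltnW (ltnW g_ge3)); rewrite odd_g /= addn0 in halfE.
have n_gt0 : (0 < n)%N by apply: leq_trans M_le; rewrite /moore_count odd_g.
have d_ge3R : 3 <= INR d by have := INR_leq d_ge3; rewrite /=; lra.
have k_ge1 : 1 <= INR (g - 1)./2 by have := @INR_leq 1 (g - 1)./2 ltac:(lia); rewrite /=; lra.
have gR : INR g = 2 * INR (g - 1)./2 + 1 by rewrite {1}gE !INR_addn halfE /=; lra.
have dR : INR (d - 1) = INR d - 1 by rewrite INR_subn //; lia.
apply: (logb_bound_moore (M := moore_count d g) (k := (g - 1)./2) (α := 2) (β := 1)) => //.
- have := congr1 INR (moore_count_odd (ltnW d_ge3) odd_g).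
  by rewrite INR_addn !INR_muln INR_expn !INR_subn //= ?dR; try lia; lra.
- by apply: lt_0_INR; apply/ltP.
- lra.
- by have := pos_INR (g - 1)./2; lra.
- by have := @ln_gt_2_3 (INR d - 1) ltac:(lra); nra.
- by have := INR_leq Kg_le; rewrite !INR_muln INR_expn dR halfE gR; lra.
- by move=> /Kg_eq /(congr1 INR); rewrite !INR_muln INR_expn dR halfE gR; lra.
Qed.

Lemma kiss_bound_even (n d g K : nat) :
  (3 <= d)%N -> (3 <= g)%N -> ~~ odd g -> (moore_count d g <= n)%N ->
  (K * g <= n * d * (d - 1) ^ g./2)%N ->
  (n = moore_count d g -> K * g = n * d * (d - 1) ^ g./2)%N ->
  INR K <= bound_even n d /\ (INR K = bound_even n d <-> n = moore_count d g).
Proof.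
move=> d_ge3 g_ge3 even_g M_le Kg_le Kg_eq.
have [halfE gE] := half_subn1 (ltnW (ltnW g_ge3)); rewrite even_g /= in halfE.
have n_gt0 : (0 < n)%N.
  apply: leq_trans M_le; rewrite /moore_count (negbTE even_g) halfE addn1 big_ord_recl.
  by rewrite muln_gt0 expn0 addn_gt0.
have d_ge3R : 3 <= INR d by have := INR_leq d_ge3; rewrite /=; lra.
have h_ge2 : 2 <= INR g./2 by have := @INR_leq 2 g./2 ltac:(lia); rewrite /=; lra.
have gR : INR g = 2 * INR g./2 by rewrite {1}gE !INR_addn halfE INR_addn /=; lra.
have dR : INR (d - 1) = INR d - 1 by rewrite INR_subn //; lia.
rewrite /bound_even -[4 * logb _ _]Rplus_0_r.
apply: (logb_bound_moore (M := moore_count d g) (k := g./2) (α := 4) (β := 0)) => //.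
- have := congr1 INR (moore_count_even (ltnW d_ge3) even_g).
  by rewrite INR_addn !INR_muln INR_expn !INR_subn //= ?dR; try lia; lra.
- by apply: Rmult_lt_0_compat; [apply: lt_0_INR; apply/ltP | lra].
- lra.
- lra.
- by have := @ln_gt_2_3 (INR d - 1) ltac:(lra); nra.
- by have := INR_leq Kg_le; rewrite !INR_muln INR_expn dR gR; lra.
- by move=> /Kg_eq /(congr1 INR); rewrite !INR_muln INR_expn dR gR; lra.
Qed.

End RealBounds.

Theorem corollary1p2 (V D : finType) (src : D -> V) (inv : D -> D) (d g n : nat) :
  is_graph src inv -> 3 <= d -> connected src inv -> regular src d ->
  is_girth src inv g -> 3 <= g -> #|V| = n ->
  (odd g ->
     Rle (INR (kiss_at src inv g)) (bound_odd n d) /\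
     ((INR (kiss_at src inv g) = bound_odd n d)%R <-> is_moore src inv)) /\
  (~~ odd g ->
     Rle (INR (kiss_at src inv g)) (bound_even n d) /\
     ((INR (kiss_at src inv g) = bound_even n d)%R <-> is_moore src inv)).
Proof.
move=> [invK inv_neq] d_ge3 conn reg girth g_ge3 card_V.
have [Kg_le M_le Kg_eq] := kiss_at_girth_bounds invK inv_neq reg girth g_ge3.
rewrite card_V in Kg_le M_le Kg_eq.
have [v _] : exists v : V, true by case: girth => -[[|e s] [cgeod_s _]] _ //; exists (src e).
have moore_iff := is_moore_iff v conn reg girth; rewrite card_V in moore_iff.
split=> parity_g.
  have [K_le K_eq] := kiss_bound_odd d_ge3 g_ge3 parity_g M_le Kg_le Kg_eq.
  by split=> //; rewrite moore_iff.
have [K_le K_eq] := kiss_bound_even d_ge3 g_ge3 parity_g M_le Kg_le Kg_eq.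
by split=> //; rewrite moore_iff.
Qed.
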